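(* Let $\mathcal{H}=(V,E)$ be a linear hypergraph without loop with $n$ vertices, and suppose $E$ can be partitioned as $E=E'\sqcup E''$ such that, with $\mathcal{H}'=(V,E')$: (i) $\mathrm{ar}(\mathcal{H}')\ge\sqrt{n}$; (ii) $|e|<\sqrt{n}$ for every $e\in E''$; (iii) for every $e\in E''$ there exists $x_0\in e$ with $\mathrm{deg}_{\mathcal{H}}(x_0)\le |e|$. Then $\mathrm{q}(\mathcal{H})\le \Delta([\mathcal{H}]_2)+1$.
   Context: A hypergraph $\mathcal{H}=(V,E)$ has a finite vertex set $V$ and a finite set $E$ of nonempty subsets of $V$ (hyperedges); a loop is a hyperedge with one element; linear means distinct hyperedges share at most one vertex. $\mathrm{deg}_{\mathcal{H}}(x)$ is the number of hyperedges containing $x$. The antirank $\mathrm{ar}$ is the minimum cardinality of a hyperedge ($\infty$ if there are none). The 2-section $[\mathcal{H}]_2$ is the simple graph on $V$ where distinct vertices are adjacent iff some hyperedge contains both; $\Delta([\mathcal{H}]_2)$ is its maximum degree. The chromatic index $\mathrm{q}(\mathcal{H})$ is the least number of colors in a coloring of hyperedges where distinct intersecting hyperedges get different colors. *)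

From mathcomp Require Import all_boot.
Set Implicit Arguments. Unset Strict Implicit. Unset Printing Implicit Defensive.

(* A hypergraph on a finite vertex type V is given by its set of hyperedges
   E : {set {set V}} (the vertex set is the whole of V). *)
Section Hyper.
Variable V : finType.

Definition hypergraph (E : {set {set V}}) : Prop := forall e, e \in E -> e != set0.

Definition loopless (E : {set {set V}}) : Prop := forall e, e \in E -> #|e| != 1.

Definition linear (E : {set {set V}}) : Prop :=
  forall e f, e \in E -> f \in E -> e != f -> #|e :&: f| <= 1.

Definition hdeg (E : {set {set V}}) (x : V) : nat := #|[set e in E | x \in e]|.

Definition sec2_adj (E : {set {set V}}) (x y : V) : bool :=
  (x != y) && [exists e in E, (x \in e) && (y \in e)].

Definition maxdeg_sec2 (E : {set {set V}}) : nat :=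
  \max_(x : V) #|[set y | sec2_adj E x y]|.

Definition edge_colorable (E : {set {set V}}) (k : nat) : bool :=
  [exists c : {ffun {set V} -> 'I_k},
     [forall e in E, forall f in E,
        ((e != f) && (e :&: f != set0)) ==> (c e != c f)]].

Lemma edge_colorable_card (E : {set {set V}}) : exists k, edge_colorable E k.
Proof.
exists #|E|.+1; apply/existsP.
exists [ffun e => inord (index e (enum E))].
apply/forallP => e; apply/implyP => eE; apply/forallP => f; apply/implyP => fE.
apply/implyP => /andP [nef _]; rewrite !ffunE.
apply: contra nef => /eqP H; apply/eqP.
have e1 : e \in enum E by rewrite mem_enum.
have f1 : f \in enum E by rewrite mem_enum.
have /(congr1 val) := H; rewrite /= !inordK; last 2 first.
- by rewrite ltnS cardE ltnW // index_mem.
- by rewrite ltnS cardE ltnW // index_mem.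
by move=> H'; rewrite -[LHS](nth_index e e1) H' nth_index.
Qed.

Definition chromatic_index (E : {set {set V}}) : nat :=
  ex_minn (edge_colorable_card E).

End Hyper.

From mathcomp Require Import all_boot zify.
Set Implicit Arguments. Unset Strict Implicit. Unset Printing Implicit Defensive.

(* If every nonempty subfamily of hyperedges has a member meeting at most
   Delta = Delta([H]_2) others, greedy colouring uses Delta + 1 colours.
   Otherwise take a subfamily H in which every member meets more than Delta
   others, and a smallest member e of H, of size s >= 2.  For x in e, the
   members of H through x pairwise meet only in x and have at least s
   vertices, so each gives x at least s - 1 neighbours of its own in [H]_2.
   Summing over x in e rules out (iii), so e is in E' and n <= s^2, and then
   forces n = s^2 = Delta + 1 with equality everywhere: every vertex of e lies
   on exactly s + 1 hyperedges, all of size s, and is adjacent to every other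
   vertex.  Propagating along hyperedges, E is an affine plane of order s, and
   its s + 1 parallel classes colour it with s + 1 <= Delta + 1 colours. *)

Lemma leq_sum_eq (I : finType) (A : {pred I}) (F G : I -> nat) :
  (forall i, i \in A -> F i <= G i) ->
  \sum_(i in A) G i <= \sum_(i in A) F i -> forall i, i \in A -> F i = G i.
Proof.
move=> leFG leGF i iA; apply/eqP; move: i iA; apply/forall_inP.
rewrite -(leqif_sum (fun i iA => leqif_eq (leFG i iA))) eqn_leq leGF andbT.
exact: leq_sum.
Qed.

Lemma exists_notin (T : finType) (X : {set T}) :
  #|X| < #|T| -> exists a, a \notin X.
Proof.
rewrite -(cardsC X) -addn1 leq_add2l => /card_gt0P [a].
by rewrite inE; exists a.
Qed.

Section CardBigcup.
Variables (I T : finType).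

Lemma card_bigcup_le (A : {pred I}) (F : I -> {set T}) :
  #|\bigcup_(i in A) F i| <= \sum_(i in A) #|F i|.
Proof.
elim/big_rec2: _ => [|i n U _ leUn]; first by rewrite cards0.
exact: leq_trans (leq_card_setU _ _) (leq_add _ leUn).
Qed.

Lemma card_bigcup_disjoint (F : I -> {set T}) :
  (forall i j, i != j -> [disjoint F i & F j]) ->
  #|\bigcup_i F i| = \sum_i #|F i|.
Proof.
move=> disjF; rewrite -sum1_card partition_disjoint_bigcup //.
by apply: eq_bigr => i _; rewrite sum1_card.
Qed.

End CardBigcup.

Section EdgeColoring.
Variable V : finType.
Implicit Types (E G H : {set {set V}}) (e f h : {set V}).

Definition adj_edges H h := [set f in H | (f != h) && (f :&: h != set0)].

Definition proper_coloring (T : eqType) (c : {set V} -> T) H :=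
  {in H &, forall e f, e != f -> e :&: f != set0 -> c e != c f}.

Lemma chromatic_index_min E k : edge_colorable E k -> chromatic_index E <= k.
Proof. by rewrite /chromatic_index; case: ex_minnP => m _; apply. Qed.

Lemma edge_colorable_proper (T : finType) (c : {set V} -> T) E k :
  proper_coloring c E -> #|c @: E| <= k.+1 -> edge_colorable E k.+1.
Proof.
move=> cE cardcE; apply/existsP.
exists [ffun e => inord (index (c e) (enum (c @: E)))].
apply/forall_inP => e eE; apply/forall_inP => f fE; apply/implyP => /andP [nef mef].
rewrite !ffunE; apply: contra (cE e f eE fE nef mef) => /eqP/(congr1 val).
have index_lt g : g \in E -> index (c g) (enum (c @: E)) < k.+1.
  by move=> gE; rewrite (leq_trans _ cardcE) // cardE index_mem mem_enum imset_f.
rewrite /= !inordK ?index_lt // => /(congr1 (nth (c e) (enum (c @: E)))).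
by rewrite !nth_index ?mem_enum ?imset_f // => ->.
Qed.

Lemma proper_coloring_extend (T : finType) (c : {set V} -> T) G h a :
  proper_coloring c (G :\ h) -> a \notin c @: adj_edges G h ->
  proper_coloring (fun f => if f == h then a else c f) G.
Proof.
move=> cG ah e f eG fG nef mef.
case: (eqVneq e h) => [eh | neh]; case: (eqVneq f h) => [fh | nfh].
- by rewrite eh fh eqxx in nef.
- apply: contra ah => /eqP ->; apply: imset_f.
  by rewrite inE fG nfh setIC -eh.
- apply: contra ah => /eqP <-; apply: imset_f.
  by rewrite inE eG neh -fh.
- by apply: cG; rewrite // !inE ?neh ?nfh.
Qed.

Lemma degenerate_proper_coloring (T : finType) (a0 : T) G :
  (forall H, H \subset G -> H != set0 ->
     exists2 h, h \in H & #|adj_edges H h| < #|T|) ->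
  exists c : {set V} -> T, proper_coloring c G.
Proof.
have [n] := ubnP #|G|; elim: n G => // n IHn G /ltnSE-leGn degG.
have [-> | G0] := eqVneq G set0; first by exists (fun=> a0) => e; rewrite inE.
have [h hG hlt] := degG G (subxx G) G0.
have [c cGh] : exists c : {set V} -> T, proper_coloring c (G :\ h).
  apply: IHn => [|H HGh]; first by rewrite (cardsD1 h G) hG in leGn.
  by apply: degG; apply: subset_trans HGh (subsetDl _ _).
have [a ah] := exists_notin (leq_ltn_trans (leq_imset_card c _) hlt).
by exists (fun f => if f == h then a else c f); apply: proper_coloring_extend.
Qed.

Lemma edge_colorable_or_dense E k :
  edge_colorable E k.+1 \/
  exists2 H : {set {set V}}, H \subset E &
    H != set0 /\ {in H, forall h, k < #|adj_edges H h|}.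
Proof.
have [dense | sparse] := boolP [exists H : {set {set V}},
  [&& H \subset E, H != set0 & [forall h in H, k < #|adj_edges H h|]]].
  have /existsP [H /and3P [HE H0 /forall_inP Hk]] := dense.
  by right; exists H.
left; have [|c cE] := degenerate_proper_coloring (@ord0 k) (G := E).
  move=> H HE H0; apply/exists_inP; rewrite card_ord; apply: contraR sparse.
  move=> /exists_inPn Hk; apply/existsP; exists H; rewrite HE H0.
  by apply/forall_inP => h hH; rewrite ltnNge -ltnS Hk.
apply: edge_colorable_proper cE _.
by apply: leq_trans (max_card _) _; rewrite card_ord.
Qed.

End EdgeColoring.

Section Hypergraph.
Variables (V : finType) (E : {set {set V}}).

Definition star x := [set f in E | x \in f].

Definition sec2_nbrs x := [set y | sec2_adj E x y].

Lemma card_sec2_nbrs_le x : #|sec2_nbrs x| <= maxdeg_sec2 E.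
Proof. exact: (leq_bigmax (F := fun x => #|[set y | sec2_adj E x y]|)). Qed.

Lemma sec2_nbrs_sub x : sec2_nbrs x \subset [set~ x].
Proof. by apply/subsetP => y; rewrite !inE /sec2_adj eq_sym => /andP []. Qed.

Lemma maxdeg_sec2_le : maxdeg_sec2 E <= #|V|.-1.
Proof.
apply/bigmax_leqP => x _; rewrite -(cardsC1 x).
exact: subset_leq_card (sec2_nbrs_sub x).
Qed.

Lemma sec2_nbrs_full x : #|V|.-1 <= #|sec2_nbrs x| ->
  forall y, y != x -> exists2 f, f \in E & (x \in f) && (y \in f).
Proof.
rewrite -(cardsC1 x) => full y yx.
have /eqP nbrsx : sec2_nbrs x == [set~ x] by rewrite eqEcard sec2_nbrs_sub.
have : y \in sec2_nbrs x by rewrite nbrsx !inE.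
by rewrite inE => /andP [_ /exists_inP [f fE xyf]]; exists f.
Qed.

Lemma linear_eq e f x y : linear E -> e \in E -> f \in E ->
  x \in e -> x \in f -> y \in e -> y \in f -> x != y -> e = f.
Proof.
move=> linE eE fE xe xf ye yf; apply: contraNeq => nef.
by apply/eqP; apply: (card_le1_eqP (linE e f eE fE nef)); rewrite inE ?xe ?ye.
Qed.

Lemma edge_card_gt1 e : hypergraph E -> loopless E -> e \in E -> 1 < #|e|.
Proof.
move=> hE lE eE; move: (hE e eE) (lE e eE); rewrite -card_gt0.
by case: #|e| => [|[|]].
Qed.

Lemma sum_star_le_sec2_nbrs x (A : {set {set V}}) : linear E ->
  A \subset star x -> \sum_(f in A) #|f|.-1 <= #|sec2_nbrs x|.
Proof.
move=> linE /subsetP AE; pose F f := if f \in A then f :\ x else set0.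
have starA f : f \in A -> (f \in E) && (x \in f) by move/AE; rewrite inE.
have -> : \sum_(f in A) #|f|.-1 = \sum_f #|F f|.
  rewrite big_mkcond; apply: eq_bigr => f _; rewrite /F.
  by case: ifP => [/starA/andP [_ xf]|_]; rewrite ?cards0 // (cardsD1 x f) xf.
rewrite -card_bigcup_disjoint => [|f g nfg].
  apply/subset_leq_card/subsetP => y /bigcupP [f _]; rewrite /F.
  case: ifP => [/starA/andP [fE xf]|_]; last by rewrite inE.
  rewrite !inE /sec2_adj => /andP [yx yf]; rewrite eq_sym yx.
  by apply/exists_inP; exists f; rewrite ?xf.
rewrite /F; case: ifP => [/starA/andP [fE xf]|_]; last by rewrite -setI_eq0 set0I.
case: ifP => [/starA/andP [gE xg]|_]; last by rewrite -setI_eq0 setI0.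
rewrite -setI_eq0; apply: contraR nfg => /set0Pn [y].
rewrite !inE => /andP [/andP [yx yf] /andP [_ yg]].
by rewrite (linear_eq linE fE gE xf xg yf yg) // eq_sym.
Qed.

(* Together with linearity, [affine_plane s] says that the hyperedges are the
   lines of an affine plane of order s. *)
Definition affine_point s x :=
  [/\ hdeg E x = s.+1, {in star x, forall f : {set V}, #|f| = s}
    & forall y, y != x -> exists2 f, f \in E & (x \in f) && (y \in f)].

Definition affine_plane s := forall x, affine_point s x.

End Hypergraph.

Lemma star_sub (V : finType) (E : {set {set V}}) x : star E x \subset E.
Proof. by apply/subsetP => f; rewrite inE => /andP []. Qed.

Lemma starS (V : finType) (H E : {set {set V}}) x :
  H \subset E -> star H x \subset star E x.
Proof.
by move=> /subsetP HE; apply/subsetP => f; rewrite !inE => /andP [/HE -> ->].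
Qed.

Section DenseSubfamily.
Variables (V : finType) (E E' E'' H : {set {set V}}) (e : {set V}).
Hypotheses (hE : hypergraph E) (lE : loopless E) (linE : linear E).
Hypotheses (hU : E = E' :|: E'') (hi : forall e, e \in E' -> #|V| <= #|e| ^ 2).
Hypothesis hiii : forall e, e \in E'' -> exists2 x0, x0 \in e & hdeg E x0 <= #|e|.
Hypotheses (HE : H \subset E) (eH : e \in H).
Hypothesis Hdense : {in H, forall h, maxdeg_sec2 E < #|adj_edges H h|}.
Hypothesis emin : {in H, forall h : {set V}, #|e| <= #|h|}.
Local Notation D := (maxdeg_sec2 E).
Local Notation s := #|e|.

Lemma min_edge_card_gt1 : 1 < s.
Proof. exact: edge_card_gt1 hE lE (subsetP HE e eH). Qed.

Lemma sum_pred_card_ge_min (A : {set {set V}}) :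
  A \subset H -> #|A| * s.-1 <= \sum_(f in A) #|f|.-1.
Proof.
move=> /subsetP AH; rewrite -sum_nat_const; apply: leq_sum => f /AH fH.
by rewrite -!subn1 leq_sub2r // emin.
Qed.

Lemma card_star_min_edge_le x : #|star H x| * s.-1 <= #|sec2_nbrs E x|.
Proof.
apply: leq_trans (sum_pred_card_ge_min (star_sub H x)) _.
exact: sum_star_le_sec2_nbrs linE (starS x HE).
Qed.

Lemma sum_card_star_min_edge : D.+1 + s <= \sum_(x in e) #|star H x|.
Proof.
have -> : \sum_(x in e) #|star H x| = \sum_(x in e) #|star H x :\ e| + s.
  rewrite -sum1_card -big_split; apply: eq_bigr => x xe.
  by rewrite (cardsD1 e) inE eH xe addnC.
rewrite leq_add2r; apply: leq_trans (Hdense eH) _.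
apply: leq_trans (card_bigcup_le _ _); apply/subset_leq_card/subsetP => f.
rewrite inE => /and3P [fH nfe /set0Pn [x]]; rewrite inE => /andP [xf xe].
by apply/bigcupP; exists x; rewrite // !inE fH xf nfe.
Qed.

Lemma min_edge_notin_E'' : e \notin E''.
Proof.
apply/negP => /hiii [x0 x0e degx0]; have s_gt1 := min_edge_card_gt1.
have starx0 : #|star H x0| <= s :=
  leq_trans (subset_leq_card (starS x0 HE)) degx0.
have others : \sum_(x in e :\ x0) #|star H x| <= D.
  rewrite -(@leq_pmul2r s.-1); last by lia.
  rewrite big_distrl; apply: (@leq_trans (\sum_(x in e :\ x0) D)).
    apply: leq_sum => x _.
    exact: leq_trans (card_star_min_edge_le x) (card_sec2_nbrs_le E x).
  by rewrite sum_nat_const mulnC (cardsD1 x0 e) x0e add1n.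
have : \sum_(x in e) #|star H x| <= s + D.
  by rewrite (big_setD1 x0 x0e); exact: leq_add starx0 others.
by move/(leq_trans sum_card_star_min_edge); rewrite addnC addnS ltnn.
Qed.

Lemma min_edge_order : #|V| = s ^ 2 /\ D.+1 = s ^ 2.
Proof.
have eE' : e \in E'.
  have : e \in E' :|: E'' by rewrite -hU (subsetP HE).
  by case/setUP => // eE''; have := min_edge_notin_E''; rewrite eE''.
have sum_le : (\sum_(x in e) #|star H x|) * s.-1 <= s * D.
  rewrite big_distrl -sum_nat_const; apply: leq_sum => x _.
  exact: leq_trans (card_star_min_edge_le x) (card_sec2_nbrs_le E x).
(* (D + 1 + s)(s - 1) <= s D gives s^2 <= D + 1 <= n <= s^2. *)
have := leq_mul sum_card_star_min_edge (leqnn s.-1).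
have := hi eE'; have := maxdeg_sec2_le E; have := min_edge_card_gt1.
nia.
Qed.

Lemma card_star_min_edge x : x \in e -> #|star H x| = s.+1.
Proof.
have [_ Ds] := min_edge_order; have s_gt1 := min_edge_card_gt1.
have le_s1 y : #|star H y| <= s.+1.
  have := leq_trans (card_star_min_edge_le y) (card_sec2_nbrs_le E y); nia.
move: x; apply: (leq_sum_eq (F := fun x => #|star H x|) (G := fun=> s.+1)).
  by move=> y _; apply: le_s1.
rewrite sum_nat_const; apply: leq_trans sum_card_star_min_edge; nia.
Qed.

Lemma sum_star_min_edge_le x :
  x \in e -> \sum_(f in star E x) #|f|.-1 <= #|star H x| * s.-1.
Proof.
move=> xe; have [_ Ds] := min_edge_order; have s_gt1 := min_edge_card_gt1.
apply: leq_trans (sum_star_le_sec2_nbrs linE (subxx _)) _.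
by have := card_sec2_nbrs_le E x; rewrite card_star_min_edge //; nia.
Qed.

Lemma star_min_edge x : x \in e -> star E x = star H x.
Proof.
move=> xe; apply/esym/eqP; rewrite eqEsubset starS //=.
rewrite -setD_eq0 -cards_eq0 -leqn0.
have := sum_star_min_edge_le xe.
rewrite (big_setID (star H x)) /= (setIidPr (starS x HE)).
have := sum_pred_card_ge_min (star_sub H x).
have : #|star E x :\: star H x| <= \sum_(f in star E x :\: star H x) #|f|.-1.
  rewrite -sum1_card; apply: leq_sum => f; rewrite !inE => /andP [_ /andP [fE _]].
  by have := edge_card_gt1 hE lE fE; lia.
move=> le_card le_H le_sum.
rewrite -(leq_add2l (#|star H x| * s.-1)) addn0.
exact: leq_trans (leq_add le_H le_card) le_sum.
Qed.

Lemma card_edge_star_min_edge x f : x \in e -> f \in star E x -> #|f| = s.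
Proof.
move=> xe fx; have fE := subsetP (star_sub E x) f fx.
move: fx; rewrite star_min_edge // => fx.
suff : s.-1 = #|f|.-1.
  by have := edge_card_gt1 hE lE fE; have := min_edge_card_gt1; lia.
apply: (leq_sum_eq (A := mem (star H x)) (F := fun=> s.-1)
                   (G := fun g => #|g|.-1)) => //.
  move=> g /(subsetP (star_sub H x)) gH.
  by rewrite -!subn1 leq_sub2r // emin.
by have := sum_star_min_edge_le xe; rewrite sum_nat_const (star_min_edge xe).
Qed.

Lemma sec2_nbrs_min_edge x : x \in e -> #|V|.-1 <= #|sec2_nbrs E x|.
Proof.
move=> xe; have [nV Ds] := min_edge_order.
by have := card_star_min_edge_le x; rewrite card_star_min_edge // nV; nia.
Qed.

Lemma min_edge_affine_point x : x \in e -> affine_point E s x.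
Proof.
move=> xe; split.
- by rewrite /hdeg -/(star E x) star_min_edge // card_star_min_edge.
- by move=> f; apply: card_edge_star_min_edge.
- exact: sec2_nbrs_full (sec2_nbrs_min_edge xe).
Qed.

End DenseSubfamily.

Lemma dense_subfamily_affine_plane (V : finType) (E E' E'' H : {set {set V}}) :
  hypergraph E -> loopless E -> linear E -> E = E' :|: E'' ->
  (forall e, e \in E' -> #|V| <= #|e| ^ 2) ->
  (forall e, e \in E'' -> exists2 x0, x0 \in e & hdeg E x0 <= #|e|) ->
  H \subset E -> H != set0 ->
  {in H, forall h, maxdeg_sec2 E < #|adj_edges H h|} ->
  exists s, [/\ 1 < s, (maxdeg_sec2 E).+1 = s ^ 2 & affine_plane E s].
Proof.
move=> hE lE linE hU hi hiii HE /set0Pn [h0 h0H] Hdense.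
have [e eH emin] := arg_minnP (fun h : {set V} => #|h|) h0H.
have affine_min f x : f \in H -> {in H, forall h : {set V}, #|f| <= #|h|} ->
    x \in f -> affine_point E #|f| x.
  move=> fH fmin.
  exact: (min_edge_affine_point hE lE linE hU hi hiii HE fH Hdense fmin).
exists #|e|; split.
- exact: min_edge_card_gt1 hE lE HE eH.
- by have [] := min_edge_order hE lE linE hU hi hiii HE eH Hdense emin.
move=> v; have /set0Pn [x xe] := hE e (subsetP HE e eH).
have [_ card_f cover] := affine_min e x eH emin xe.
have [-> | vx] := eqVneq v x; first exact: affine_min.
have [f fE /andP [xf vf]] := cover v vx.
have fx : f \in star E x by rewrite inE fE xf.
rewrite -(card_f f fx); apply: (affine_min f v _ _ vf); last by rewrite card_f.
move: fx; rewrite (star_min_edge hE lE linE hU hi hiii HE eH Hdense emin xe).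
exact: (subsetP (star_sub H x)).
Qed.

Section AffinePlane.
Variables (V : finType) (E : {set {set V}}) (s : nat).
Hypotheses (hE : hypergraph E) (linE : linear E) (affE : affine_plane E s).

Definition parallel (f g : {set V}) := (f == g) || [disjoint f & g].

Lemma parallel_sym f g : parallel f g = parallel g f.
Proof. by rewrite /parallel eq_sym disjoint_sym. Qed.

Lemma line_card l : l \in E -> #|l| = s.
Proof.
move=> lE; have /set0Pn [x xl] := @hE l lE.
by have [_ -> //] := affE x; rewrite inE lE xl.
Qed.

Lemma card_star_meeting p l : l \in E -> p \notin l ->
  #|[set f in star E p | ~~ [disjoint f & l]]| = s.
Proof.
move=> lE pl; set M := [set f in star E p | _].
have meets f : f \in M -> exists2 z, z \in f & z \in l.
  by rewrite inE -setI_eq0 => /andP [_ /set0Pn [z /setIP []]]; exists z.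
apply/eqP; rewrite eqn_leq; apply/andP; split.
  have sub : M \subset \bigcup_(z in l) [set f in star E p | z \in f].
    apply/subsetP => f fM; have [z zf zl] := meets f fM.
    by apply/bigcupP; exists z; rewrite // inE zf andbT; case/setIdP: fM.
  apply: leq_trans (subset_leq_card sub) (leq_trans (card_bigcup_le _ _) _).
  rewrite -(line_card lE) -sum1_card; apply: leq_sum => z zl.
  apply/card_le1_eqP => f g; rewrite !inE => /andP [/andP [fE pf] zf].
  move=> /andP [/andP [gE pg] zg]; apply: linear_eq linE gE fE pg pf zg zf _.
  by apply: contraNneq pl => ->.
have sub : l \subset \bigcup_(f in M) (f :&: l).
  apply/subsetP => z zl; have [_ _ cover] := affE p.
  have [f fE /andP [pf zf]] : exists2 f, f \in E & (p \in f) && (z \in f).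
    by apply: cover; apply: contraNneq pl => <-.
  apply/bigcupP; exists f; last by rewrite inE zf zl.
  by rewrite !inE fE pf -setI_eq0; apply/set0Pn; exists z; rewrite inE zf zl.
rewrite -{1}(line_card lE); apply: leq_trans (subset_leq_card sub) _.
apply: leq_trans (card_bigcup_le _ _) _; rewrite -sum1_card; apply: leq_sum => f.
rewrite !inE => /andP [/andP [fE pf] _]; apply: linE => //.
by apply: contraNneq pl => <-.
Qed.

Lemma card_star_parallel p l :
  l \in E -> #|[set f in star E p | parallel f l]| = 1.
Proof.
move=> lE; have [pl | npl] := boolP (p \in l).
  apply/eqP/cards1P; exists l; apply/setP => f; rewrite !inE.
  apply/idP/eqP => [/andP [/andP [_ pf]] | ->]; last by rewrite lE pl /parallel eqxx.
  by rewrite /parallel => /orP [/eqP // | /disjointFr/(_ pf)]; rewrite pl.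
have -> : [set f in star E p | parallel f l] =
          star E p :\: [set f : {set V} | ~~ [disjoint f & l]].
  apply/setP => f; rewrite !inE /parallel.
  have [-> | _] := eqVneq f l; first by rewrite (negbTE npl) !andbF.
  by case: (f \in E); case: (p \in f); case: [disjoint _ & _].
have degp : #|star E p| = s.+1 by have [] := affE p.
have := cardsID [set f : {set V} | ~~ [disjoint f & l]] (star E p).
by rewrite -setIdE card_star_meeting // degp -[s.+1]addn1 => /addnI.
Qed.

Lemma affine_plane_colorable (x0 : V) : edge_colorable E s.+1.
Proof.
(* Colour each line by the line through x0 parallel to it. *)
pose par l := odflt l [pick f in star E x0 | parallel f l].
have parP l : l \in E -> par l \in star E x0 /\ parallel (par l) l.
  move=> lE; rewrite /par; case: pickP => [f /andP [] // | none].
  have /card_gt0P [f] : 0 < #|[set f in star E x0 | parallel f l]|.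
    by rewrite card_star_parallel.
  by rewrite inE none.
apply: (edge_colorable_proper (c := par)).
  move=> e f eE fE nef /set0Pn [p /setIP [pe pf]]; apply: contra nef => /eqP par_ef.
  have [/(subsetP (star_sub E x0)) parE pare] := parP e eE.
  have [_ parf] := parP f fE.
  apply/eqP; apply: (card_le1_eqP (eq_leq (card_star_parallel p parE))).
    by rewrite !inE fE pf par_ef parallel_sym.
  by rewrite !inE eE pe parallel_sym.
have [degx0 _ _] := affE x0; rewrite -degx0 /hdeg -/(star E x0).
by apply/subset_leq_card/subsetP => _ /imsetP [l /parP [parl _] ->].
Qed.

End AffinePlane.

Theorem theorem5p3 (V : finType) (E E' E'' : {set {set V}}) :
  hypergraph E -> loopless E -> linear E ->
  E = E' :|: E'' -> [disjoint E' & E''] ->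
  (* (i) ar(H') >= sqrt n, i.e. every e in E' has |e| >= sqrt #|V| *)
  (forall e, e \in E' -> #|V| <= #|e| ^ 2) ->
  (* (ii) |e| < sqrt n for e in E'' *)
  (forall e, e \in E'' -> #|e| ^ 2 < #|V|) ->
  (* (iii) *)
  (forall e, e \in E'' -> exists2 x0, x0 \in e & hdeg E x0 <= #|e|) ->
  chromatic_index E <= maxdeg_sec2 E + 1.
Proof.
move=> hE lE linE hU _ hi _ hiii; rewrite addn1.
have [colE | [H HE [H0 Hdense]]] := edge_colorable_or_dense E (maxdeg_sec2 E).
  exact: chromatic_index_min.
have [s [s_gt1 Ds affE]] :=
  dense_subfamily_affine_plane hE lE linE hU hi hiii HE H0 Hdense.
have /set0Pn [h hH] := H0; have /set0Pn [x0 _] := hE h (subsetP HE h hH).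
apply: leq_trans (chromatic_index_min (affine_plane_colorable hE linE affE x0)) _.
by rewrite Ds; nia.
Qed.
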